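(* $\left\|\begin{bmatrix}1&1&0&0\\0&1&1&0\\0&0&1&1\\0&0&1&0\end{bmatrix}\right\|_\bullet>\left\|\begin{bmatrix}1&1&0&0\\0&1&1&0\\0&0&1&1\\0&0&0&1\end{bmatrix}\right\|_\bullet$.
   Context: Fix $\mathbb F\in\{\mathbb R,\mathbb C\}$. For an $m\times n$ matrix $A$, the Schur norm is $\|A\|_\bullet=\sup\{\|A\bullet X\|: X\in M_{m,n}(\mathbb F),\ \|X\|\le1\}$, where $A\bullet X=[a_{ij}x_{ij}]$ is the entrywise product and $\|\cdot\|$ is the operator norm $\ell^2_n\to\ell^2_m$. *)

From HB Require Import structures.
From mathcomp Require Import all_boot all_order all_algebra.
From mathcomp Require Import boolp classical_sets reals.
From mathcomp Require complex.
Import complex.ComplexField.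
Set Implicit Arguments. Unset Strict Implicit. Unset Printing Implicit Defensive.
Import Order.TTheory GRing.Theory Num.Theory.
Local Open Scope ring_scope.
Local Open Scope classical_set_scope.

(* Euclidean (ell^2) norm of a column vector, given the modulus |.| : F -> R
   of the scalar field F (F = R with the absolute value, or F = R[i]
   with the complex modulus). *)
Definition vnorm (R : realType) (F : Type) (abs : F -> R) (n : nat)
  (x : 'cV[F]_n) : R := Num.sqrt (\sum_(i < n) abs (x i ord0) ^+ 2).

Definition opnorm (R : realType) (F : pzRingType) (abs : F -> R) (m n : nat)
  (A : 'M[F]_(m, n)) : R :=
  sup [set vnorm abs (A *m x) | x in [set x : 'cV[F]_n | vnorm abs x <= 1]].

Definition schur_prod (F : pzRingType) (m n : nat) (A X : 'M[F]_(m, n)) :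
  'M[F]_(m, n) := \matrix_(i, j) (A i j * X i j).

Definition schur_norm (R : realType) (F : pzRingType) (abs : F -> R) (m n : nat)
  (A : 'M[F]_(m, n)) : R :=
  sup [set opnorm abs (schur_prod A X) |
         X in [set X : 'M[F]_(m, n) | opnorm abs X <= 1]].

Definition absR (R : realType) (x : R) : R := `|x|.
Definition absC (R : realType) (z : complex.complex R) : R :=
  Num.sqrt (complex.Re z ^+ 2 + complex.Im z ^+ 2).

Definition mx01 {F : pzRingType} (n : nat) (t : nat -> nat -> bool) : 'M[F]_n :=
  \matrix_(i, j) (t i j)%:R.

(* [[1,1,0,0],[0,1,1,0],[0,0,1,1],[0,0,1,0]] *)
Definition tA (i j : nat) : bool :=
  [|| (i == 0) && ((j == 0) || (j == 1)),
      (i == 1) && ((j == 1) || (j == 2)),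
      (i == 2) && ((j == 2) || (j == 3)) |
      (i == 3) && (j == 2)].
(* [[1,1,0,0],[0,1,1,0],[0,0,1,1],[0,0,0,1]] *)
Definition tB (i j : nat) : bool :=
  [|| (i == 0) && ((j == 0) || (j == 1)),
      (i == 1) && ((j == 1) || (j == 2)),
      (i == 2) && ((j == 2) || (j == 3)) |
      (i == 3) && (j == 3)].

From HB Require Import structures.
From mathcomp Require Import all_boot all_order all_algebra.
From mathcomp Require Import boolp classical_sets reals.
From mathcomp Require complex.
From mathcomp Require Import ring lra.
Import complex.ComplexField.
Import Order.TTheory GRing.Theory Num.Theory.
Set Implicit Arguments. Unset Strict Implicit. Unset Printing Implicit Defensive.
Local Open Scope ring_scope.
Local Open Scope classical_set_scope.

(* If M = U V^T with real matrices U, V whose rows have norms at most a and b,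
   then Cauchy-Schwarz in the inner index gives |(M o X) x| <= a b |X| |x|, so
   ||M||_o <= ab.  An explicit such factorisation of the matrix with last row
   (0,0,0,1) gives ||.||_o^2 <= 1.52.  Conversely ||M||_o >= |(M o Q) x| for any
   orthogonal Q and unit vector x, and an explicit rational choice gives
   |(A o Q) x|^2 >= 1.535 for the matrix with last row (0,0,1,0).  Only the
   relation |z|^2 = (Re z)^2 + (Im z)^2 is used, so both bounds hold over R and C. *)

Lemma sqr_sum_mul_le (R : realDomainType) (I : finType) (u v : I -> R) :
  (\sum_i u i * v i) ^+ 2 <= (\sum_i u i ^+ 2) * (\sum_i v i ^+ 2).
Proof.
have lagrange : ((\sum_i u i ^+ 2) * (\sum_i v i ^+ 2) - (\sum_i u i * v i) ^+ 2) *+ 2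
    = \sum_i \sum_j (u i * v j - u j * v i) ^+ 2.
  have AB : (\sum_i u i ^+ 2) * (\sum_i v i ^+ 2) = \sum_i \sum_j u i ^+ 2 * v j ^+ 2.
    exact: big_distrlr.
  have BA : (\sum_i u i ^+ 2) * (\sum_i v i ^+ 2) = \sum_i \sum_j u j ^+ 2 * v i ^+ 2.
    by rewrite mulrC big_distrlr /=; apply: eq_bigr => i _; apply: eq_bigr => j _; rewrite mulrC.
  have CC : (\sum_i u i * v i) ^+ 2 = \sum_i \sum_j (u i * v i) * (u j * v j).
    exact: big_distrlr.
  rewrite mulrnBl mulr2n {1}AB BA CC -big_split -sumrMnl -sumrB /=.
  apply: eq_bigr => i _; rewrite -sumrMnl.
  by rewrite -big_split -sumrB /=; apply: eq_bigr => j _; ring.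
rewrite -subr_ge0 -(pmulrn_lge0 _ (ltn0Sn 1)) lagrange.
by apply: sumr_ge0 => i _; apply: sumr_ge0 => j _; apply: sqr_ge0.
Qed.

Lemma sum_sqr_mulmx_isometry (R : comPzRingType) m n (q : 'M[R]_(m, n)) (y : 'I_n -> R) :
  q^T *m q = 1%:M -> \sum_i (\sum_j q i j * y j) ^+ 2 = \sum_j y j ^+ 2.
Proof.
move=> qtq; have gram j1 j2 : \sum_i q i j1 * q i j2 = (j1 == j2)%:R.
  move/matrixP/(_ j1 j2): qtq; rewrite !mxE => <-.
  by apply: eq_bigr => i _; rewrite mxE.
transitivity (\sum_j1 \sum_j2 y j1 * y j2 * \sum_i q i j1 * q i j2).
  under eq_bigr do rewrite expr2 big_distrlr /=.
  rewrite exchange_big /=; apply: eq_bigr => j1 _; rewrite exchange_big /=.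
  apply: eq_bigr => j2 _; rewrite mulr_sumr; apply: eq_bigr => i _; ring.
apply: eq_bigr => j1 _; rewrite (bigD1 j1) //= [X in _ + X]big1 => [|j2 j21].
  by rewrite gram eqxx mulr1 addr0 expr2.
by rewrite gram eq_sym (negPf j21) mulr0.
Qed.

(* The scalar fields [R] and [C] of the statement, abstracted: a ring with an
   embedding of the reals, real and imaginary parts, and a modulus. *)
Record rcScalars (R : realType) (F : comPzRingType) := RCScalars {
  ofR : {rmorphism R -> F};
  re : F -> R;
  im : F -> R;
  nrm : F -> R;
  reD : forall x y, re (x + y) = re x + re y;
  imD : forall x y, im (x + y) = im x + im y;
  re_ofRM : forall r z, re (ofR r * z) = r * re z;
  im_ofRM : forall r z, im (ofR r * z) = r * im z;
  re1 : re 1 = 1;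
  im1 : im 1 = 0;
  sqr_nrm : forall z, nrm z ^+ 2 = re z ^+ 2 + im z ^+ 2;
  nrm_ge0 : forall z, 0 <= nrm z;
  nrmD : forall x y, nrm (x + y) <= nrm x + nrm y;
  nrmM : forall x y, nrm (x * y) = nrm x * nrm y }.

Section RCScalarsTheory.
Variables (R : realType) (F : comPzRingType) (S : rcScalars R F).
Local Notation ofR := (ofR S).
Local Notation re := (re S).
Local Notation im := (im S).
Local Notation nrm := (nrm S).

Lemma re0 : re 0 = 0.
Proof. by have := reD S 0 0; rewrite addr0; lra. Qed.

Lemma im0 : im 0 = 0.
Proof. by have := imD S 0 0; rewrite addr0; lra. Qed.

Lemma re_sum (I : finType) (f : I -> F) : re (\sum_i f i) = \sum_i re (f i).
Proof. by elim/big_rec2: _ => [|i a b _ <-]; rewrite ?re0 ?reD. Qed.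

Lemma im_sum (I : finType) (f : I -> F) : im (\sum_i f i) = \sum_i im (f i).
Proof. by elim/big_rec2: _ => [|i a b _ <-]; rewrite ?im0 ?imD. Qed.

Lemma nrm0 : nrm 0 = 0.
Proof. by apply/eqP; rewrite -sqrf_eq0 sqr_nrm re0 im0 expr0n addr0. Qed.

Lemma nrm1 : nrm 1 = 1.
Proof.
apply/eqP; rewrite -(@eqrXn2 _ 2) ?nrm_ge0 //.
by rewrite sqr_nrm re1 im1 expr0n expr1n addr0.
Qed.

Lemma sqr_nrm_ofRM r z : nrm (ofR r * z) ^+ 2 = r ^+ 2 * nrm z ^+ 2.
Proof. by rewrite !sqr_nrm re_ofRM im_ofRM; ring. Qed.

Lemma sqr_nrm_ofR r : nrm (ofR r) ^+ 2 = r ^+ 2.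
Proof. by rewrite -[ofR r]mulr1 sqr_nrm_ofRM nrm1 expr1n mulr1. Qed.

Lemma nrm_sum (I : finType) (f : I -> F) : nrm (\sum_i f i) <= \sum_i nrm (f i).
Proof.
elim/big_rec2: _ => [|i a b _ IH]; first by rewrite nrm0.
by apply: le_trans (nrmD S _ _) _; rewrite lerD2l.
Qed.

(* Cauchy-Schwarz applied to the real and imaginary parts separately. *)
Lemma sqr_nrm_sum_ofRM_le (I : finType) (u : I -> R) (w : I -> F) :
  nrm (\sum_k ofR (u k) * w k) ^+ 2 <= (\sum_k u k ^+ 2) * (\sum_k nrm (w k) ^+ 2).
Proof.
rewrite sqr_nrm re_sum im_sum.
under eq_bigr do rewrite re_ofRM.
under [X in _ + X ^+ 2 <= _]eq_bigr do rewrite im_ofRM.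
under [X in _ <= _ * X]eq_bigr do rewrite sqr_nrm.
by rewrite big_split /= mulrDr; apply: lerD; apply: sqr_sum_mul_le.
Qed.

End RCScalarsTheory.

Section OperatorNorm.
Variables (R : realType) (F : comPzRingType) (S : rcScalars R F).
Local Notation ofR := (ofR S).
Local Notation nrm := (nrm S).

Definition sqnorm n (x : 'cV[F]_n) : R := \sum_i nrm (x i 0) ^+ 2.

Lemma vnormE n (x : 'cV[F]_n) : vnorm nrm x = Num.sqrt (sqnorm x).
Proof. by []. Qed.

Lemma sqnorm0 n : sqnorm (0 : 'cV[F]_n) = 0.
Proof. by rewrite /sqnorm big1 // => i _; rewrite mxE nrm0 expr0n. Qed.

Lemma sqnorm_ge0 n (x : 'cV[F]_n) : 0 <= sqnorm x.
Proof. by apply: sumr_ge0 => i _; apply: sqr_ge0. Qed.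

Lemma sqnorm_le1 n (x : 'cV[F]_n) : (vnorm nrm x <= 1) = (sqnorm x <= 1).
Proof. by rewrite vnormE -[X in _ <= X]sqrtr1 ler_sqrt ?ler01. Qed.

Lemma sqr_nrm_le_sqnorm n (x : 'cV[F]_n) i : nrm (x i 0) ^+ 2 <= sqnorm x.
Proof.
rewrite /sqnorm (bigD1 i) //= lerDl.
by apply: sumr_ge0 => j _; apply: sqr_ge0.
Qed.

Lemma nrm_le1_sqnorm n (x : 'cV[F]_n) i : sqnorm x <= 1 -> nrm (x i 0) <= 1.
Proof.
move=> x1; have := le_trans (sqr_nrm_le_sqnorm x i) x1.
by rewrite expr_le1 ?nrm_ge0.
Qed.

Lemma sqnorm_scale n c (x : 'cV[F]_n) : sqnorm (ofR c *: x) = c ^+ 2 * sqnorm x.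
Proof. by rewrite /sqnorm mulr_sumr; apply: eq_bigr => i _; rewrite mxE sqr_nrm_ofRM. Qed.

Variables m n : nat.
Implicit Types (A X : 'M[F]_(m, n)) (x : 'cV[F]_n).

Lemma sqnorm_mulmx_le A (c : 'I_m -> 'I_n -> R) x :
  (forall i j, nrm (A i j) <= c i j) -> sqnorm x <= 1 ->
  sqnorm (A *m x) <= \sum_i (\sum_j c i j) ^+ 2.
Proof.
move=> Ac x1; apply: ler_sum => i _.
have nrm_Ax : nrm ((A *m x) i 0) <= \sum_j c i j.
  rewrite mxE; apply: le_trans (nrm_sum S _) _; apply: ler_sum => j _.
  rewrite nrmM; apply: le_trans (Ac i j); apply: ler_piMr; first exact: nrm_ge0.
  exact: nrm_le1_sqnorm.
by apply: lerXn2r; rewrite ?nnegrE ?(le_trans (nrm_ge0 S _) nrm_Ax) ?nrm_ge0.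
Qed.

Lemma opnorm_set_ub A :
  has_ubound [set vnorm nrm (A *m x) | x in [set x | vnorm nrm x <= 1]].
Proof.
exists (Num.sqrt (\sum_i (\sum_j nrm (A i j)) ^+ 2)) => _ [x /= x1 <-].
rewrite vnormE ler_sqrt; last by apply: sumr_ge0 => i _; apply: sqr_ge0.
by apply: sqnorm_mulmx_le; rewrite // -sqnorm_le1.
Qed.

Lemma opnorm_ge A x : sqnorm x <= 1 -> Num.sqrt (sqnorm (A *m x)) <= opnorm nrm A.
Proof.
by move=> x1; apply: (ub_le_sup (opnorm_set_ub A)); exists x; rewrite /= ?sqnorm_le1.
Qed.

Lemma opnorm_le A c : 0 <= c -> (forall x, sqnorm x <= 1 -> sqnorm (A *m x) <= c) ->
  opnorm nrm A <= Num.sqrt c.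
Proof.
move=> c0 Ac; apply: ge_sup.
  exists (vnorm nrm (A *m 0)), 0 => //=.
  by rewrite sqnorm_le1 sqnorm0 ler01.
by move=> _ [x /= x1 <-]; rewrite vnormE ler_sqrt // Ac // -sqnorm_le1.
Qed.

(* Scaling [y] by [1 / sqrt ((|y|^2 + |A y|^2) / 2)] would otherwise produce a
   unit vector that [A] maps outside the unit ball. *)
Lemma sqnorm_mulmx_contraction A y : opnorm nrm A <= 1 -> sqnorm (A *m y) <= sqnorm y.
Proof.
move=> A1; have ball x : sqnorm x <= 1 -> sqnorm (A *m x) <= 1.
  by move=> x1; rewrite -sqnorm_le1; apply: le_trans (opnorm_ge A x1) A1.
rewrite leNgt; apply/negP => lt_y_Ay; have y0 := sqnorm_ge0 y.
set u := (sqnorm y + sqnorm (A *m y)) / 2; have u0 : 0 < u by rewrite /u; lra.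
pose c := (Num.sqrt u)^-1; have c2 : c ^+ 2 = u^-1 by rewrite exprVn sqr_sqrtr ?ltW.
have := ball (ofR c *: y); rewrite -scalemxAr !sqnorm_scale c2 !(mulrC u^-1).
rewrite !ler_pdivrMr // !mul1r => /(_ _); rewrite /u; lra.
Qed.

Lemma nrm_le1_contraction X i j : opnorm nrm X <= 1 -> nrm (X i j) <= 1.
Proof.
move=> X1; have e1 : sqnorm (delta_mx j 0 : 'cV[F]_n) = 1.
  rewrite /sqnorm (bigD1 j) //= big1 => [|k kj]; first by rewrite mxE !eqxx nrm1 expr1n addr0.
  by rewrite mxE (negPf kj) nrm0 expr0n.
have := le_trans (sqr_nrm_le_sqnorm (X *m delta_mx j 0) i) (sqnorm_mulmx_contraction _ X1).
by rewrite e1 -colE mxE expr_le1 ?nrm_ge0.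
Qed.

Lemma opnorm_map_isometry_le1 (q : 'M[R]_(m, n)) :
  q^T *m q = 1%:M -> opnorm nrm (map_mx ofR q) <= 1.
Proof.
move=> qtq; rewrite -sqrtr1; apply: opnorm_le => [|y y1]; first exact: ler01.
apply: le_trans y1; rewrite /sqnorm.
under eq_bigr do rewrite sqr_nrm mxE re_sum im_sum.
under eq_bigr do under eq_bigr do rewrite mxE re_ofRM.
under eq_bigr do under [X in _ + X ^+ 2]eq_bigr do rewrite mxE im_ofRM.
under [X in _ <= X]eq_bigr do rewrite sqr_nrm.
by rewrite !big_split /= !sum_sqr_mulmx_isometry.
Qed.

End OperatorNorm.

Section SchurNorm.
Variables (R : realType) (F : comPzRingType) (S : rcScalars R F).
Local Notation ofR := (ofR S).
Local Notation nrm := (nrm S).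
Variables m n : nat.
Implicit Types (M X : 'M[F]_(m, n)).

(* With [M i j = <U_i, V_j>], the entries of [(M o X) x] are
   [sum_l U i l (X y_l)_i] where [y_l j = V j l x_j]; apply Cauchy-Schwarz in [l]
   and the contractivity of [X] to each [y_l]. *)
Lemma sqnorm_schur_mulmx_le k M X (U : 'M[R]_(m, k)) (V : 'M[R]_(n, k)) a b x :
  M = map_mx ofR (U *m V^T) ->
  (forall i, \sum_l U i l ^+ 2 <= a) -> (forall j, \sum_l V j l ^+ 2 <= b) ->
  0 <= a -> opnorm nrm X <= 1 ->
  sqnorm S (schur_prod M X *m x) <= a * b * sqnorm S x.
Proof.
move=> defM Ua Vb a0 X1.
have MUV i j : M i j = ofR (\sum_l U i l * V j l).
  by rewrite defM !mxE; under eq_bigr do rewrite mxE.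
pose y l : 'cV[F]_n := \col_j (ofR (V j l) * x j 0).
have entry i : (schur_prod M X *m x) i 0 = \sum_l ofR (U i l) * (X *m y l) i 0.
  rewrite mxE; under eq_bigr do rewrite mxE MUV rmorph_sum !mulr_suml.
  rewrite exchange_big /=; apply: eq_bigr => l _; rewrite mxE mulr_sumr.
  by apply: eq_bigr => j _; rewrite !mxE rmorphM; ring.
have -> : a * b * sqnorm S x = a * (b * sqnorm S x) by rewrite mulrA.
apply: le_trans (_ : \sum_i a * \sum_l nrm ((X *m y l) i 0) ^+ 2 <= _).
  apply: ler_sum => i _; rewrite entry; apply: le_trans (sqr_nrm_sum_ofRM_le _ _ _) _.
  by apply: ler_wpM2r; [apply: sumr_ge0 => l _; apply: sqr_ge0 | apply: Ua].
rewrite -mulr_sumr exchange_big /=; apply: (ler_wpM2l a0).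
apply: le_trans (_ : \sum_l sqnorm S (y l) <= _).
  by apply: ler_sum => l _; apply: sqnorm_mulmx_contraction.
rewrite /sqnorm exchange_big /= mulr_sumr; apply: ler_sum => j _.
under eq_bigr do rewrite mxE sqr_nrm_ofRM.
by rewrite -mulr_suml; apply: ler_wpM2r; [apply: sqr_ge0 | apply: Vb].
Qed.

Lemma schur_opnorm_le_factor k M X (U : 'M[R]_(m, k)) (V : 'M[R]_(n, k)) a b :
  M = map_mx ofR (U *m V^T) ->
  (forall i, \sum_l U i l ^+ 2 <= a) -> (forall j, \sum_l V j l ^+ 2 <= b) ->
  0 <= a -> 0 <= b -> opnorm nrm X <= 1 ->
  opnorm nrm (schur_prod M X) <= Num.sqrt (a * b).
Proof.
move=> defM Ua Vb a0 b0 X1; apply: opnorm_le => [|x x1]; first exact: mulr_ge0.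
apply: le_trans (sqnorm_schur_mulmx_le x defM Ua Vb a0 X1) _.
by rewrite ler_piMr ?mulr_ge0.
Qed.

Lemma schur_norm_le_factor k M (U : 'M[R]_(m, k)) (V : 'M[R]_(n, k)) a b :
  M = map_mx ofR (U *m V^T) ->
  (forall i, \sum_l U i l ^+ 2 <= a) -> (forall j, \sum_l V j l ^+ 2 <= b) ->
  0 <= a -> 0 <= b -> schur_norm nrm M <= Num.sqrt (a * b).
Proof.
move=> defM Ua Vb a0 b0; apply: ge_sup.
  exists (opnorm nrm (schur_prod M 0)), 0 => //=.
  by rewrite -sqrtr1; apply: opnorm_le => [|x _]; rewrite ?ler01 // mul0mx sqnorm0.
by move=> _ [X /= X1 <-]; apply: schur_opnorm_le_factor defM Ua Vb a0 b0 X1.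
Qed.

Lemma schur_set_ub M :
  has_ubound [set opnorm nrm (schur_prod M X) | X in [set X | opnorm nrm X <= 1]].
Proof.
exists (Num.sqrt (\sum_i (\sum_j nrm (M i j)) ^+ 2)) => _ [X /= X1 <-].
apply: opnorm_le => [|x x1]; first by apply: sumr_ge0 => i _; apply: sqr_ge0.
apply: sqnorm_mulmx_le x1 => i j; rewrite mxE nrmM.
by rewrite ler_piMr ?nrm_ge0 ?nrm_le1_contraction.
Qed.

Lemma schur_norm_ge M X : opnorm nrm X <= 1 -> opnorm nrm (schur_prod M X) <= schur_norm nrm M.
Proof. by move=> X1; apply: (ub_le_sup (schur_set_ub M)); exists X. Qed.

End SchurNorm.

Section RealMatrices.
Variables (R : realType) (F : comPzRingType) (S : rcScalars R F).
Local Notation ofR := (ofR S).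

Lemma mx01_ofR n t : (mx01 n t : 'M[F]_n) = map_mx ofR (mx01 n t).
Proof. by apply/matrixP => i j; rewrite !mxE rmorph_nat. Qed.

Lemma schur_prod_ofR m n (A B : 'M[R]_(m, n)) :
  schur_prod (map_mx ofR A) (map_mx ofR B) = map_mx ofR (schur_prod A B).
Proof. by apply/matrixP => i j; rewrite !mxE rmorphM. Qed.

Lemma sqnorm_ofR n (v : 'cV[R]_n) : sqnorm S (map_mx ofR v) = \sum_i v i 0 ^+ 2.
Proof. by apply: eq_bigr => i _; rewrite mxE sqr_nrm_ofR. Qed.

End RealMatrices.

Definition mx_of_rows (R : realType) m n (rows : seq (seq R)) : 'M[R]_(m, n) :=
  \matrix_(i, j) nth 0 (nth [::] rows i) j.

Definition fracn (R : realType) (p q : nat) : R := p%:R / q%:R.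

(* [simpl] would otherwise expand the numerals below into unary form. *)
#[local] Arguments Nat.of_num_uint : simpl never.

Section Certificates.
Variable R : realType.
Local Notation fracn := (@fracn R).

(* [mx01 4 tB = U V^T] with rows of [U], [V] of squared length at most
   [4931/4000] and [1233/1000]. *)
Definition U_rows : seq (seq R) := [::
  [::   fracn 111 100;              0;               0;          0];
  [::     fracn 17 40;     fracn 41 40;               0;          0];
  [:: - fracn 13 100;   fracn 103 200;   - fracn 39 40;           0];
  [::   fracn 13 100; - fracn 39 200; - fracn 121 200; fracn 9 10]].

Definition V_rows : seq (seq R) := [::
  [:: fracn 100 111; - fracn 1700 4551; - fracn 6260 19721; - fracn 226004 532467];
  [:: fracn 100 111;   fracn 2740 4551;   fracn 11708 59163;  fracn 355012 2662335];
  [::            0;       fracn 40 41;    - fracn 272 533;  - fracn 3158 23985];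
  [::            0;                0;     - fracn 40 39;      fracn 148 351]].

(* An orthogonal matrix [Q] and a vector [x] of length at most 1 with
   [|(mx01 4 tA o Q) x|^2 >= 1535/1000]. *)
Definition Q_rows : seq (seq R) := [::
  [::   fracn 7879 9721;   fracn 5200 9721; - fracn 1960 9721;   fracn 1240 9721];
  [:: - fracn 2960 9721;   fracn 7079 9721;   fracn 5632 9721; - fracn 1976 9721];
  [::   fracn 1000 9721; - fracn 1472 9721;   fracn 5191 9721;   fracn 8024 9721];
  [::   fracn 4760 9721; - fracn 3896 9721;   fracn 5656 9721; - fracn 4967 9721]].

Definition x_rows : seq (seq R) :=
  [:: [:: fracn 300 1049]; [:: fracn 600 1049]; [:: fracn 700 1049]; [:: fracn 400 1049]].

Local Notation U := (mx_of_rows 4 4 U_rows).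
Local Notation V := (mx_of_rows 4 4 V_rows).
Local Notation Q := (mx_of_rows 4 4 Q_rows).
Local Notation x := (mx_of_rows 4 1 x_rows).

Lemma tB_factor : mx01 4 tB = U *m V^T.
Proof.
apply/matrixP => i j; rewrite !mxE !big_ord_recr big_ord0 !mxE.
by case: i => [[|[|[|[|i]]]] Hi] //=; case: j => [[|[|[|[|j]]]] Hj] //=; rewrite /fracn; lra.
Qed.

Lemma U_rows_le i : \sum_l U i l ^+ 2 <= fracn 4931 4000.
Proof.
rewrite !big_ord_recr big_ord0 !mxE.
by case: i => [[|[|[|[|i]]]] Hi] //=; rewrite /fracn; lra.
Qed.

Lemma V_rows_le j : \sum_l V j l ^+ 2 <= fracn 1233 1000.
Proof.
rewrite !big_ord_recr big_ord0 !mxE.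
by case: j => [[|[|[|[|j]]]] Hj] //=; rewrite /fracn; lra.
Qed.

Lemma Q_orthogonal : Q^T *m Q = 1%:M.
Proof.
apply/matrixP => i j; rewrite !mxE !big_ord_recr big_ord0 !mxE.
by case: i => [[|[|[|[|i]]]] Hi] //=; case: j => [[|[|[|[|j]]]] Hj] //=; rewrite /fracn; lra.
Qed.

Lemma x_sqnorm_le1 : \sum_i x i 0 ^+ 2 <= 1.
Proof. by rewrite !big_ord_recr big_ord0 !mxE /= /fracn; lra. Qed.

Lemma tA_Q_x_ge : fracn 1535 1000 <= \sum_i ((schur_prod (mx01 4 tA) Q *m x) i 0) ^+ 2.
Proof.
under eq_bigr do rewrite mxE.
by rewrite !big_ord_recr !big_ord0 !mxE /= /fracn; lra.
Qed.

End Certificates.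

Section Bounds.
Variables (R : realType) (F : comPzRingType) (S : rcScalars R F).
Local Notation ofR := (ofR S).
Local Notation nrm := (nrm S).

Lemma schur_norm_tB_le :
  schur_norm nrm (mx01 4 tB : 'M[F]_4) <= Num.sqrt (fracn R 4931 4000 * fracn R 1233 1000).
Proof.
apply: (schur_norm_le_factor (U := mx_of_rows 4 4 (U_rows R)) (V := mx_of_rows 4 4 (V_rows R))).
- by rewrite (mx01_ofR S) tB_factor.
- exact: U_rows_le.
- exact: V_rows_le.
- by rewrite /fracn divr_ge0.
- by rewrite /fracn divr_ge0.
Qed.

Lemma schur_norm_tA_ge : Num.sqrt (fracn R 1535 1000) <= schur_norm nrm (mx01 4 tA : 'M[F]_4).
Proof.
pose Q := map_mx ofR (mx_of_rows 4 4 (Q_rows R)).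
pose x := map_mx ofR (mx_of_rows 4 1 (x_rows R)).
have Q1 : opnorm nrm Q <= 1 by apply: opnorm_map_isometry_le1; apply: Q_orthogonal.
have x1 : sqnorm S x <= 1 by rewrite sqnorm_ofR; apply: x_sqnorm_le1.
apply: le_trans (le_trans (opnorm_ge _ x1) (schur_norm_ge _ Q1)).
rewrite (mx01_ofR S) schur_prod_ofR -map_mxM sqnorm_ofR ler_sqrt; first exact: tA_Q_x_ge.
by apply: sumr_ge0 => i _; apply: sqr_ge0.
Qed.

Lemma schur_norm_tB_lt_tA :
  schur_norm nrm (mx01 4 tB : 'M[F]_4) < schur_norm nrm (mx01 4 tA : 'M[F]_4).
Proof.
apply: le_lt_trans schur_norm_tB_le (lt_le_trans _ schur_norm_tA_ge).
by rewrite ltr_sqrt /fracn; lra.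
Qed.

End Bounds.

Definition realScalars (R : realType) : rcScalars R R.
Proof.
refine (@RCScalars R R idfun idfun (fun=> 0) (@absR R) _ _ _ _ _ _ _ _ _ _).
- by [].
- by move=> *; rewrite addr0.
- by [].
- by move=> *; rewrite mulr0.
- by [].
- by [].
- by move=> z; rewrite /absR real_normK ?num_real // expr0n addr0.
- by move=> z; rewrite /absR normr_ge0.
- by move=> x y; rewrite /absR ler_normD.
- by move=> x y; rewrite /absR normrM.
Defined.

Lemma absCE (R : realType) (z : complex.complex R) : absC z = Normc.normc z.
Proof. by case: z. Qed.

Definition complexScalars (R : realType) : rcScalars R (complex.complex R).
Proof.
refine (@RCScalars R _ (complex.real_complex R) (@complex.Re R) (@complex.Im R) (@absC R)
  _ _ _ _ _ _ _ _ _ _).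
- by case=> a b [c d].
- by case=> a b [c d].
- by move=> r [a b] /=; ring.
- by move=> r [a b] /=; ring.
- by [].
- by [].
- by move=> z; rewrite /absC sqr_sqrtr // addr_ge0 ?sqr_ge0.
- by move=> z; rewrite /absC sqrtr_ge0.
- by move=> x y; rewrite !absCE; case/andP: (lec_normD x y).
- by move=> x y; rewrite !absCE Normc.normcM.
Defined.

Theorem proposition5p5 (R : realType) :
  schur_norm (@absR R) (mx01 4 tB : 'M[R]_4) <
    schur_norm (@absR R) (mx01 4 tA : 'M[R]_4)
  /\
  schur_norm (@absC R) (mx01 4 tB : 'M[complex.complex R]_4) <
    schur_norm (@absC R) (mx01 4 tA : 'M[complex.complex R]_4).
Proof.
split; first exact: (schur_norm_tB_lt_tA (realScalars R)).
exact: (schur_norm_tB_lt_tA (complexScalars R)).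
Qed.
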